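(* Let $N\ge 2$ be an integer, let $m_N=\min\{m\ge1: d(m)=N\}$, and write $m_N=p_1^{\alpha_1}\cdots p_r^{\alpha_r}$ with all $\alpha_i\ge1$. Then for every integer $k\ge 1$ and every $j\in\{1,\dots,r\}$: if $p_j>p_{r+1}^{1/2^k}$, then $\Omega(\alpha_j+1)\le k$.
   Context: $d(m)$ is the number of positive divisors of $m$. $p_j$ denotes the $j$-th smallest prime. $\Omega(n)$ denotes the number of prime factors of $n$ counted with multiplicity (the number of prime power divisors). The primes dividing $m_N$ are exactly $p_1,\dots,p_r$ (the exponents of $m_N$ are nonincreasing in the prime). *)

From mathcomp Require Import all_boot.
Set Implicit Arguments. Unset Strict Implicit. Unset Printing Implicit Defensive.

Definition ndiv (m : nat) : nat := size (divisors m).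

Definition bigOmega (n : nat) : nat := \sum_(p <- primes n) logn p n.

(* p is the j-th smallest prime (j >= 1): p is prime and exactly j-1 primes are < p *)
Definition is_nth_prime (j p : nat) : bool :=
  prime p && (count prime (iota 0 p) == j.-1).

Definition is_mN (N m : nat) : Prop :=
  0 < m /\ ndiv m = N /\ (forall m', 0 < m' -> ndiv m' = N -> m <= m').

(* The proof is an exchange argument.  Next, minimality of m shows that
   the primes dividing m are closed downwards, hence q does not divide m, and
   that for every factorisation logn p m + 1 = u * v with v > 1 the number
   p ^ (u - 1) q ^ (v - 1) m / p ^ (logn p m) (which has N divisors too) is
   not smaller than m, i.e. p ^ u <= q.  Finally, if Omega(logn p m + 1) > k,
   splitting off one prime factor v leaves u >= 2 ^ k, so p ^ (2 ^ k) <= q. *)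

From mathcomp Require Import all_boot.
Set Implicit Arguments. Unset Strict Implicit. Unset Printing Implicit Defensive.

Lemma ndiv_prod_logn n : ndiv n = \prod_(p <- primes n) (logn p n).+1.
Proof.
rewrite /ndiv /divisors prime_decompE.
elim: (primes n) => [|p s IHs]; first by rewrite big_nil.
rewrite big_cons -IHs /=; elim: (logn p n) => [|e IHe] /=; first by rewrite mul1n.
by rewrite size_merge size_cat size_map IHe mulSn addnC.
Qed.

Lemma big_primes_widen (R : Type) (idx : R) (op : Monoid.law idx)
    (F : nat -> nat -> R) (n B : nat) :
  n < B -> (forall p, F p 0 = idx) ->
  \big[op/idx]_(p <- primes n) F p (logn p n)
    = \big[op/idx]_(0 <= p < B) F p (logn p n).
Proof.
move=> ltnB F0; rewrite -(filter_pi_of ltnB) big_filter big_rmcond // => p.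
by rewrite /pi_of /= -logn_gt0 lt0n negbK => /eqP ->.
Qed.

Lemma ndiv_mul_coprime a b : 0 < a -> 0 < b -> coprime a b ->
  ndiv (a * b) = ndiv a * ndiv b.
Proof.
move=> a0 b0 cab; have ab0 : 0 < a * b by rewrite muln_gt0 a0.
have ltaB : a < (a * b).+1 by rewrite ltnS leq_pmulr.
have ltbB : b < (a * b).+1 by rewrite ltnS leq_pmull.
rewrite !ndiv_prod_logn !(@big_primes_widen _ _ _ (fun _ e => e.+1) _ (a * b).+1) //.
rewrite -big_split /=; apply: eq_bigr => p _; rewrite lognM //.
have [->|pa] := posnP (logn p a); first by rewrite mul1n.
suff -> : logn p b = 0 by rewrite addn0 muln1.
apply/eqP; rewrite -leqn0 leqNgt logn_gt0; apply: contraL cab => pb.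
by rewrite coprime_has_primes //; apply/negPn/hasP; exists p; rewrite // -logn_gt0.
Qed.

Lemma ndiv_pfactor p e : prime p -> ndiv (p ^ e) = e.+1.
Proof.
move=> pp; case: e => [|e]; first by rewrite expn0.
by rewrite ndiv_prod_logn primesX // primes_prime // big_seq1 pfactorK.
Qed.

Lemma ndiv_pfactor_mul p e a : prime p -> 0 < a -> coprime p a ->
  ndiv (p ^ e * a) = e.+1 * ndiv a.
Proof.
move=> pp a0 cpa.
by rewrite ndiv_mul_coprime ?ndiv_pfactor ?coprimeXl // expn_gt0 prime_gt0.
Qed.

Lemma bigOmega_mul a b : 0 < a -> 0 < b ->
  bigOmega (a * b) = bigOmega a + bigOmega b.
Proof.
move=> a0 b0; have ab0 : 0 < a * b by rewrite muln_gt0 a0.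
have ltaB : a < (a * b).+1 by rewrite ltnS leq_pmulr.
have ltbB : b < (a * b).+1 by rewrite ltnS leq_pmull.
rewrite /bigOmega !(@big_primes_widen _ _ _ (fun _ e => e) _ (a * b).+1) //.
by rewrite -big_split /=; apply: eq_bigr => p _; rewrite lognM.
Qed.

Lemma bigOmega_prime p : prime p -> bigOmega p = 1.
Proof. by move=> pp; rewrite /bigOmega primes_prime // big_seq1 logn_prime ?eqxx. Qed.

(* Every prime factor is at least 2, hence 2 ^ Omega(n) <= n. *)
Lemma exp2_bigOmega_le n : 0 < n -> 2 ^ bigOmega n <= n.
Proof.
move=> n0; rewrite {2}(prod_prime_decomp n0) prime_decompE big_map /= expn_sum.
rewrite big_seq_cond [X in _ <= X]big_seq_cond; apply: leq_prod => p.
move=> /andP[pn _]; rewrite leq_exp2r ?logn_gt0 //.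
by move: pn; rewrite mem_primes => /andP[/prime_gt1].
Qed.

(* If Omega(n) > k, then n = u * v with v > 1 and u >= 2 ^ k: split off the
   least prime factor v, which leaves Omega(u) >= k. *)
Lemma bigOmega_split n k : k < bigOmega n ->
  exists u v, [/\ n = u * v, 1 < v & 2 ^ k <= u].
Proof.
move=> kn; have n1 : 1 < n.
  rewrite ltnNge; apply: contraTN kn; rewrite -ltnS -primes_eq0 => /eqP pn.
  by rewrite /bigOmega pn big_nil.
have pv := pdiv_prime n1; have [u Eu] := dvdnP (pdiv_dvd n).
have u0 : 0 < u by move: (ltnW n1); rewrite Eu muln_gt0 => /andP[].
exists u, (pdiv n); split; rewrite ?prime_gt1 //.
apply: leq_trans _ (exp2_bigOmega_le u0); rewrite leq_exp2l //.
by move: kn; rewrite Eu bigOmega_mul ?(prime_gt0 pv) // (bigOmega_prime pv) addn1.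
Qed.

Lemma count_primes_below (s : seq nat) q : uniq s -> q \in s ->
  (forall p, prime p -> p < q -> p \in s) -> count prime (iota 0 q) < size s.
Proof.
move=> us qs below; rewrite -size_filter.
suff: size (q :: filter prime (iota 0 q)) <= size s by [].
apply: uniq_leq_size => [|x].
  by rewrite /= mem_filter mem_iota ltnn !andbF filter_uniq ?iota_uniq.
rewrite inE => /predU1P[-> //|]; rewrite mem_filter mem_iota => /andP[px].
by move/below; apply.
Qed.

Section MinimalNumber.

Variables N m : nat.
Hypothesis mN : is_mN N m.

Lemma mN_gt0 : 0 < m.
Proof. by case: mN. Qed.

Lemma mN_le m' : 0 < m' -> ndiv m' = ndiv m -> m <= m'.
Proof. by case: mN => _ [-> min_m]; apply: min_m. Qed.

(* Replacing q ^ e by p ^ e with p < q keeps d and decreases m, so a prime q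
   can divide m only if every smaller prime p does. *)
Lemma mN_primes_downward p q : prime p -> prime q -> p < q -> q %| m -> p %| m.
Proof.
move=> pp pq ltpq qm; apply: contraTT ltpq => npm; rewrite -leqNgt.
have [a cqa Em] := pfactor_coprime pq mN_gt0; set e := logn q m in Em.
have e0 : 0 < e by rewrite logn_gt0 mem_primes pq mN_gt0.
have a0 : 0 < a by move: mN_gt0; rewrite Em muln_gt0 => /andP[].
have cpa : coprime p a.
  by rewrite prime_coprime //; apply: contra npm; rewrite Em; apply: dvdn_mulr.
have le_m : m <= p ^ e * a.
  apply: mN_le; first by rewrite muln_gt0 expn_gt0 prime_gt0.
  by rewrite Em (mulnC a) !ndiv_pfactor_mul.
by move: le_m; rewrite Em mulnC leq_pmul2r // leq_exp2r.
Qed.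

Lemma mN_next_prime_ndvd q : is_nth_prime (size (primes m)).+1 q -> ~~ (q %| m).
Proof.
case/andP=> pq /eqP count_q; apply/negP => qm.
have: count prime (iota 0 q) < size (primes m).
  apply: count_primes_below; first exact: primes_uniq.
    by rewrite mem_primes pq mN_gt0.
  move=> p pp ltpq; rewrite mem_primes pp mN_gt0.
  exact: mN_primes_downward ltpq qm.
by rewrite count_q ltnn.
Qed.

(* Exchange step: if logn p m + 1 = u * v with v > 1 and q is a prime not
   dividing m, then lowering the exponent of p to u - 1 and adjoining
   q ^ (v - 1) preserves d, so minimality forces p ^ u <= q. *)
Lemma mN_exponent_factor p q u v : prime p -> prime q -> ~~ (q %| m) ->
  (logn p m).+1 = u * v -> 1 < v -> p ^ u <= q.
Proof.
move=> pp pq nqm Euv v1; have u0 : 0 < u by case: u Euv.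
have p0 := prime_gt0 pp; have q0 := prime_gt0 pq.
have [a cpa Em] := pfactor_coprime pp mN_gt0; set al := logn p m in Euv Em.
have a0 : 0 < a by move: mN_gt0; rewrite Em muln_gt0 => /andP[].
have cqa : coprime q a.
  by rewrite prime_coprime //; apply: contra nqm; rewrite Em; apply: dvdn_mulr.
have al0 : 0 < al by rewrite -ltnS Euv (leq_mul u0 v1).
have cpq : coprime p q.
  rewrite prime_coprime // dvdn_prime2 //; apply: contra nqm => /eqP <-.
  by move: al0; rewrite logn_gt0 mem_primes => /and3P[].
have Eal : al = u.-1 + u * v.-1.
  by apply/eqP; rewrite -eqSS Euv -{1}(prednK (ltnW v1)) mulnS -addSn prednK.
have qa0 : 0 < q ^ v.-1 * a by rewrite muln_gt0 expn_gt0 q0.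
have le_m : m <= p ^ u.-1 * (q ^ v.-1 * a).
  apply: mN_le; first by rewrite muln_gt0 expn_gt0 p0.
  rewrite ndiv_pfactor_mul ?coprimeMr ?coprimeXr ?cpq // ndiv_pfactor_mul //.
  by rewrite Em (mulnC a) ndiv_pfactor_mul // !prednK ?(ltnW v1) // Euv mulnA.
move: le_m; rewrite Em mulnC Eal expnD -mulnA leq_pmul2l ?expn_gt0 ?p0 //.
by rewrite leq_pmul2r // expnM leq_exp2r // -ltnS prednK // ltnW.
Qed.

End MinimalNumber.

(* The theorem: a larger Omega would give p ^ (2 ^ k) <= p ^ u <= q. *)
Theorem lemma2p2 (N m : nat) :
  2 <= N -> is_mN N m ->
  forall (k j : nat), 1 <= k -> 1 <= j <= size (primes m) ->
  forall (pj q : nat), is_nth_prime j pj -> is_nth_prime (size (primes m)).+1 q ->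
  q < pj ^ (2 ^ k) ->
  bigOmega (logn pj m).+1 <= k.
Proof.
move=> _ mN k j _ _ pj q /andP[ppj _] q_next lt_q; rewrite leqNgt.
apply/negP => /bigOmega_split[u [v [Euv v1 le_ku]]].
have pq : prime q by case/andP: q_next.
have nqm := mN_next_prime_ndvd mN q_next.
have le_pu_q := mN_exponent_factor mN ppj pq nqm Euv v1.
have := leq_trans (leq_pexp2l (prime_gt0 ppj) le_ku) le_pu_q.
by rewrite leqNgt lt_q.
Qed.
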